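(* Let $n$ be odd and let $L=\bigoplus_{i\in\mathbb{Z}/n\mathbb{Z}}L_i$ be a $(\mathbb{Z}/n\mathbb{Z})$-graded Lie algebra over a field with $L_0=0$ such that $$\big[[x_{d_1},x_{d_2}],[x_{d_3},x]\big]=0$$ for all $x_{d_i}\in L_{d_i}$ and all $x\in L$ whenever $(d_1,d_2,d_3)$ is $(-1)$-independent. Then $L$ is metabelian, i.e. $[[L,L],[L,L]]=0$.
   Context: A $(\mathbb{Z}/n\mathbb{Z})$-graded Lie algebra is $L=\bigoplus_{i=0}^{n-1}L_i$ with $[L_i,L_j]\subseteq L_{i+j \bmod n}$. A sequence $(a_1,\dots,a_k)$ in $\mathbb{Z}/n\mathbb{Z}$ is $(-1)$-dependent if $t_1a_1+\dots+t_ka_k=0$ for some $t_i\in\{0,1\}$ not all zero, and $(-1)$-independent otherwise. *)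

From HB Require Import structures.
From mathcomp Require Import all_boot all_order all_algebra.
Set Implicit Arguments. Unset Strict Implicit. Unset Printing Implicit Defensive.
Import GRing.Theory.
Local Open Scope ring_scope.

Definition is_lie_bracket (K : fieldType) (L : lmodType K) (br : L -> L -> L) : Prop :=
  [/\ (forall (a : K) (x y z : L), br (a *: x + y) z = a *: br x z + br y z),
      (forall (a : K) (x y z : L), br z (a *: x + y) = a *: br z x + br z y),
      (forall x : L, br x x = 0) &
      (forall x y z : L, br x (br y z) + br y (br z x) + br z (br x y) = 0)].

Definition is_subspace (K : fieldType) (L : lmodType K) (V : L -> Prop) : Prop :=
  V 0 /\ (forall (a : K) (u v : L), V u -> V v -> V (a *: u + v)).

(* (Z/mZ)-grading L = (+)_{i in Z/mZ} L_i of the Lie algebra (L, br); the index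
   set Z/mZ is represented by 'I_m with m = n.+1 (its canonical zmodType). *)
Definition is_lie_grading (K : fieldType) (L : lmodType K) (n : nat)
    (br : L -> L -> L) (Lg : 'I_n.+1 -> L -> Prop) : Prop :=
  [/\ (forall i, is_subspace (Lg i)),
      (forall x : L, exists f : 'I_n.+1 -> L,
          (forall i, Lg i (f i)) /\ x = \sum_(i < n.+1) f i),
      (forall f : 'I_n.+1 -> L, (forall i, Lg i (f i)) ->
          \sum_(i < n.+1) f i = 0 -> forall i, f i = 0) &
      (forall (i j : 'I_n.+1) (x y : L), Lg i x -> Lg j y -> Lg (i + j) (br x y))].

(* (-1)-dependence of a finite sequence in Z/mZ: some nonempty subfamily
   (t_i in {0,1}, not all zero) sums to 0. *)
Definition minus1_dependent (n : nat) (s : seq 'I_n.+1) : Prop :=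
  exists t : bitseq, [/\ size t = size s, has id t & \sum_(a <- mask t s) a = 0].

Definition minus1_independent (n : nat) (s : seq 'I_n.+1) : Prop :=
  ~ minus1_dependent s.

Definition derived (K : fieldType) (L : lmodType K) (br : L -> L -> L) (x : L) : Prop :=
  exists s : seq (K * (L * L)), x = \sum_(p <- s) p.1 *: br p.2.1 p.2.2.

Definition metabelian (K : fieldType) (L : lmodType K) (br : L -> L -> L) : Prop :=
  forall u v : L, derived br u -> derived br v -> br u v = 0.

From HB Require Import structures.
From mathcomp Require Import all_boot all_order all_algebra.
Set Implicit Arguments. Unset Strict Implicit. Unset Printing Implicit Defensive.
Import GRing.Theory.

(* Expanding [[L,L],[L,L]] by multilinearity, it suffices to show that
   [[x_a, x_b], [x_c, x_d]] = 0 for homogeneous x_i of degree i. This is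
   clear unless a, b, c, d, a+b, c+d and a+b+c+d are all nonzero. If one of
   the triples (a,b,c), (a,b,d), (c,d,a), (c,d,b) is (-1)-independent, the
   hypothesis applies up to antisymmetry. Otherwise c, d are among -a, -b,
   -(a+b) and a, b among -c, -d, -(c+d); as n is odd this forces a = b or
   c = d, say a = b. Then c is -a or -2a, so x_c commutes with x_a and x_b or
   with [x_a, x_b] since L_0 = 0, and the same holds for x_d; by the Jacobi
   identity [x_a, x_b] then commutes with [x_c, x_d]. *)

Local Open Scope ring_scope.

Section NoTwoTorsion.

Variable G : zmodType.
Hypothesis no2tors : forall x : G, x + x = 0 -> x = 0.

(* For a, b, a + b nonzero, the nonzero c for which (a, b, c) is
   (-1)-dependent. *)
Definition minus1_dependents (a b : G) : seq G := [:: - a; - b; - (a + b)].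

Lemma mem_minus1_dependentsC a b x :
  (x \in minus1_dependents a b) = (x \in minus1_dependents b a).
Proof. by rewrite !inE orbCA addrC. Qed.

Lemma notin_minus1_dependents a b :
  a != 0 -> b != a -> b \notin minus1_dependents (- a) (- (a + b)).
Proof.
move=> a0 ba; have aa0 : a + a != 0 by apply: contra_neq a0; apply: no2tors.
rewrite !inE !opprK -opprD opprK (negbTE ba) addrA -subr_eq subrr -subr_eq subrr.
by rewrite !(eq_sym 0) (negbTE a0) (negbTE aa0).
Qed.

Lemma minus1_dependents_eq a b c d :
  a != 0 -> b != 0 -> a + b + (c + d) != 0 ->
  c \in minus1_dependents a b -> d \in minus1_dependents a b ->
  a \in minus1_dependents c d -> b \in minus1_dependents c d ->
  a = b \/ c = d.
Proof.
move=> a0 b0 s0 Dc Dd Da Db.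
have [-> | ba] := eqVneq b a; first by left.
have [-> | dc] := eqVneq d c; first by right.
have ab : a != b by rewrite eq_sym.
exfalso; move: Dc Dd; rewrite !inE => /or3P[]/eqP Ec /or3P[]/eqP Ed; subst c d.
- by rewrite eqxx in dc.
- by rewrite -opprD subrr eqxx in s0.
- by rewrite (negbTE (notin_minus1_dependents a0 ba)) in Db.
- by rewrite (addrC (- b)) -opprD subrr eqxx in s0.
- by rewrite eqxx in dc.
- by rewrite (addrC a) (negbTE (notin_minus1_dependents b0 ab)) in Da.
- by rewrite mem_minus1_dependentsC (negbTE (notin_minus1_dependents a0 ba)) in Db.
- rewrite mem_minus1_dependentsC (addrC a) in Da.
  by rewrite (negbTE (notin_minus1_dependents b0 ab)) in Da.
- by rewrite eqxx in dc.
Qed.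

End NoTwoTorsion.

Arguments minus1_dependents {G}.

Lemma ord_addrr_eq0 n : odd n.+1 -> forall x : 'I_n.+1, x + x = 0 -> x = 0.
Proof.
move=> odd_m x /(congr1 val) /= /eqP; rewrite -/(dvdn _ _) addnn -muln2.
by rewrite Gauss_dvdl ?coprimen2 // /dvdn modn_small // => /eqP x0; apply: val_inj.
Qed.

Lemma minus1_independent3 n (a b c : 'I_n.+1) :
  a != 0 -> b != 0 -> c != 0 -> a + b != 0 -> c \notin minus1_dependents a b ->
  minus1_independent [:: a; b; c].
Proof.
move=> a0 b0 c0; rewrite addr_eq0 !inE => ab0 /norP[ca /norP[cb cab]] [t [size_t has_t]].
case: t size_t has_t => [|[] [|[] [|[] []]]] //= _ _; rewrite !big_cons big_nil !addr0.
all: by apply/eqP; rewrite ?addrA ?(addrC _ c) ?addr_eq0.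
Qed.

Section LieAlgebra.

Variables (K : fieldType) (L : lmodType K) (br : L -> L -> L).
Hypothesis lieL : is_lie_bracket br.

Lemma br0l y : br 0 y = 0.
Proof.
by case: lieL => linl _ _ _; have := linl (-1) 0 0 y; rewrite scaler0 addr0 scaleN1r addNr.
Qed.

Lemma br0r x : br x 0 = 0.
Proof.
by case: lieL => _ linr _ _; have := linr (-1) 0 0 x; rewrite scaler0 addr0 scaleN1r addNr.
Qed.

Lemma brDl x y z : br (x + y) z = br x z + br y z.
Proof. by case: lieL => linl _ _ _; have := linl 1 x y z; rewrite !scale1r. Qed.

Lemma brDr x y z : br x (y + z) = br x y + br x z.
Proof. by case: lieL => _ linr _ _; have := linr 1 y z x; rewrite !scale1r. Qed.

Lemma brZl a x y : br (a *: x) y = a *: br x y.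
Proof. by case: lieL => linl _ _ _; have := linl a x 0 y; rewrite !addr0 br0l addr0. Qed.

Lemma brZr a x y : br x (a *: y) = a *: br x y.
Proof. by case: lieL => _ linr _ _; have := linr a y 0 x; rewrite !addr0 br0r addr0. Qed.

Lemma brC x y : br y x = - br x y.
Proof.
case: lieL => _ _ alt _; apply/eqP; rewrite -addr_eq0 addrC.
by have := alt (x + y); rewrite brDl !brDr !alt add0r addr0 => ->.
Qed.

Lemma brNr x y : br x (- y) = - br x y.
Proof. by rewrite -scaleN1r brZr scaleN1r. Qed.

Lemma br_eq0C x y : br y x = 0 -> br x y = 0.
Proof. by rewrite brC => /eqP; rewrite oppr_eq0 => /eqP. Qed.

Lemma br_eq0Cr u x y : br u (br y x) = 0 -> br u (br x y) = 0.
Proof. by rewrite [br y x]brC brNr => /eqP; rewrite oppr_eq0 => /eqP. Qed.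

Lemma br_suml I (r : seq I) (P : pred I) (F : I -> L) y :
  br (\sum_(i <- r | P i) F i) y = \sum_(i <- r | P i) br (F i) y.
Proof. exact: (big_morph (br^~ y) (fun x z => brDl x z y) (br0l y)). Qed.

Lemma br_sumr I (r : seq I) (P : pred I) (F : I -> L) x :
  br x (\sum_(i <- r | P i) F i) = \sum_(i <- r | P i) br x (F i).
Proof. exact: (big_morph (br x) (brDr x) (br0r x)). Qed.

Lemma br_centralizer u x y : br u x = 0 -> br u y = 0 -> br u (br x y) = 0.
Proof.
case: lieL => _ _ _ jacobi ux0 uy0.
by have := jacobi u x y; rewrite (brC u y) uy0 ux0 oppr0 !br0r !addr0.
Qed.

Lemma metabelian_of_brbr :
  (forall p q p' q', br (br p q) (br p' q') = 0) -> metabelian br.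
Proof.
move=> brbr0 u v [s ->] [t ->]; rewrite br_suml big1 // => -[k [x y]] _ /=.
rewrite brZl br_sumr big1 ?scaler0 // => -[k' [x' y']] _ /=.
by rewrite brZr brbr0 scaler0.
Qed.

Section Graded.

Variables (n : nat) (Lg : 'I_n.+1 -> L -> Prop).
Hypothesis gradL : is_lie_grading br Lg.
Hypothesis Lg0 : forall x : L, Lg 0 x -> x = 0.

Lemma homog_br i j x y : Lg i x -> Lg j y -> Lg (i + j) (br x y).
Proof. by case: gradL => _ _ _; apply. Qed.

Lemma homog_eq0 i x : Lg i x -> i = 0 -> x = 0.
Proof. by move=> hx i0; rewrite i0 in hx; apply: Lg0. Qed.

Lemma homog_ind (P : L -> Prop) :
  P 0 -> (forall x y, P x -> P y -> P (x + y)) ->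
  (forall i x, Lg i x -> P x) -> forall x, P x.
Proof.
move=> P0 PD Phomog x; case: gradL => _ decomp _ _.
by have [f [homog_f ->]] := decomp x; apply: big_ind => // i _; apply: Phomog.
Qed.

Lemma br_minus1_dependents_eq0 a c xa ya xc :
  Lg a xa -> Lg a ya -> Lg c xc -> c \in minus1_dependents a a ->
  br xc (br xa ya) = 0.
Proof.
move=> ha ha' hc; rewrite !inE orbA orbb => /orP[] /eqP c_eq.
- apply: br_centralizer.
  + by apply: homog_eq0 (homog_br hc ha) _; rewrite c_eq addNr.
  + by apply: homog_eq0 (homog_br hc ha') _; rewrite c_eq addNr.
- by apply: homog_eq0 (homog_br hc (homog_br ha ha')) _; rewrite c_eq addNr.
Qed.

Hypothesis odd_m : odd n.+1.
Hypothesis brbr_independent : forall d1 d2 d3 : 'I_n.+1,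
  minus1_independent [:: d1; d2; d3] ->
  forall x1 x2 x3 x : L, Lg d1 x1 -> Lg d2 x2 -> Lg d3 x3 ->
    br (br x1 x2) (br x3 x) = 0.

Lemma brbr_homog_dependents_eq0 a b c d xa xb xc xd :
  Lg a xa -> Lg b xb -> Lg c xc -> Lg d xd ->
  a != 0 -> b != 0 -> a + b + (c + d) != 0 ->
  c \in minus1_dependents a b -> d \in minus1_dependents a b ->
  a \in minus1_dependents c d -> b \in minus1_dependents c d ->
  br (br xa xb) (br xc xd) = 0.
Proof.
move=> ha hb hc hd a0 b0 s0 Dc Dd Da Db.
have [eq_ab|eq_cd] := minus1_dependents_eq (ord_addrr_eq0 odd_m) a0 b0 s0 Dc Dd Da Db.
- subst b; apply: br_centralizer; apply: br_eq0C.
  + exact: br_minus1_dependents_eq0 ha hb hc Dc.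
  + exact: br_minus1_dependents_eq0 ha hb hd Dd.
- subst d; apply/br_eq0C/br_centralizer; apply: br_eq0C.
  + exact: br_minus1_dependents_eq0 hc hd ha Da.
  + exact: br_minus1_dependents_eq0 hc hd hb Db.
Qed.

Lemma brbr_homog_eq0 a b c d xa xb xc xd :
  Lg a xa -> Lg b xb -> Lg c xc -> Lg d xd -> br (br xa xb) (br xc xd) = 0.
Proof.
move=> ha hb hc hd; have hab := homog_br ha hb; have hcd := homog_br hc hd.
have [a0|a0] := eqVneq a 0; first by rewrite (homog_eq0 ha a0) !br0l.
have [b0|b0] := eqVneq b 0; first by rewrite (homog_eq0 hb b0) br0r br0l.
have [c0|c0] := eqVneq c 0; first by rewrite (homog_eq0 hc c0) br0l br0r.
have [d0|d0] := eqVneq d 0; first by rewrite (homog_eq0 hd d0) !br0r.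
have [ab0|ab0] := eqVneq (a + b) 0; first by rewrite (homog_eq0 hab ab0) br0l.
have [cd0|cd0] := eqVneq (c + d) 0; first by rewrite (homog_eq0 hcd cd0) br0r.
have [s0|s0] := eqVneq (a + b + (c + d)) 0.
  exact: homog_eq0 (homog_br hab hcd) s0.
have [Dc|/(minus1_independent3 a0 b0 c0 ab0)/brbr_independent brbr0] :=
  boolP (c \in minus1_dependents a b); last exact: brbr0.
have [Dd|/(minus1_independent3 a0 b0 d0 ab0)/brbr_independent brbr0] :=
  boolP (d \in minus1_dependents a b); last exact/br_eq0Cr/brbr0.
have [Da|/(minus1_independent3 c0 d0 a0 cd0)/brbr_independent brbr0] :=
  boolP (a \in minus1_dependents c d); last exact/br_eq0C/brbr0.
have [Db|/(minus1_independent3 c0 d0 b0 cd0)/brbr_independent brbr0] :=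
  boolP (b \in minus1_dependents c d); last exact/br_eq0C/br_eq0Cr/brbr0.
exact: brbr_homog_dependents_eq0 ha hb hc hd a0 b0 s0 Dc Dd Da Db.
Qed.

Lemma brbr_eq0 p q p' q' : br (br p q) (br p' q') = 0.
Proof.
elim/homog_ind: p => [|p1 p2 IH1 IH2|a xa ha]; first by rewrite !br0l.
  by rewrite !brDl IH1 IH2 addr0.
elim/homog_ind: q => [|q1 q2 IH1 IH2|b xb hb]; first by rewrite br0r br0l.
  by rewrite brDr brDl IH1 IH2 addr0.
elim/homog_ind: p' => [|p1 p2 IH1 IH2|c xc hc]; first by rewrite br0l br0r.
  by rewrite brDl brDr IH1 IH2 addr0.
elim/homog_ind: q' => [|q1 q2 IH1 IH2|d xd hd]; first by rewrite !br0r.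
  by rewrite !brDr IH1 IH2 addr0.
exact: brbr_homog_eq0 ha hb hc hd.
Qed.

End Graded.

End LieAlgebra.

Theorem lemma3 (K : fieldType) (L : lmodType K) (n : nat)
    (br : L -> L -> L) (Lg : 'I_n.+1 -> L -> Prop) :
  odd n.+1 ->
  is_lie_bracket br ->
  is_lie_grading br Lg ->
  (forall x : L, Lg 0 x -> x = 0) ->
  (forall d1 d2 d3 : 'I_n.+1, minus1_independent [:: d1; d2; d3] ->
     forall x1 x2 x3 x : L, Lg d1 x1 -> Lg d2 x2 -> Lg d3 x3 ->
       br (br x1 x2) (br x3 x) = 0) ->
  metabelian br.
Proof.
move=> odd_m lieL gradL Lg0 brbr_independent.
exact: metabelian_of_brbr lieL (brbr_eq0 lieL gradL Lg0 odd_m brbr_independent).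
Qed.
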